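(* Let $\Omega$ be a locally compact metrisable space and $\{\mu_n\}_{n\in\mathbb{N}}\cup\{\mu\}\subset\mathcal{M}(\Omega)$. Then $\mu_n^+\to\mu^+$ vaguely and $\mu_n^-\to\mu^-$ vaguely if and only if $\mu_n\to\mu$ vaguely and $\limsup_{n\to\infty}|\mu_n|(K)\le|\mu|(K)$ for every compact set $K\subset\Omega$.
   Context: $\Omega$ carries its Borel $\sigma$-algebra. $\mathcal{M}(\Omega)$ denotes the set of finite signed Radon measures on $\Omega$: finite signed Borel measures $\mu$ with Hahn–Jordan decomposition $\mu=\mu^+-\mu^-$ whose variation $|\mu|=\mu^++\mu^-$ satisfies $|\mu|(A)=\sup\{|\mu|(K):K\subset A,\ K\text{ compact}\}$ for all Borel $A$. Vague convergence $\nu_n\to\nu$ means $\int f\,d\nu_n\to\int f\,d\nu$ for all continuous $f:\Omega\to\mathbb{R}$ with compact support. *)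

From HB Require Import structures.
From mathcomp Require Import all_boot all_order all_algebra.
From mathcomp Require Import all_classical all_reals all_analysis.
Set Implicit Arguments. Unset Strict Implicit. Unset Printing Implicit Defensive.
Import Order.TTheory GRing.Theory Num.Theory.
Import numFieldNormedType.Exports.
Local Open Scope classical_set_scope.
Local Open Scope ring_scope.

Notation Borel T := (g_sigma_algebraType (@open T)).

Section signed_measures.
Context (R : realType) (T : ptopologicalType).
Local Notation X := (Borel T).

Definition hahn_P (nu : {charge set X -> \bar R}) : set X :=
  proj1_sig (cid (Hahn_decomposition nu)).
Definition hahn_N (nu : {charge set X -> \bar R}) : set X :=
  proj1_sig (cid (proj2_sig (cid (Hahn_decomposition nu)))).
Lemma hahn_PN (nu : {charge set X -> \bar R}) :
  hahn_decomposition nu (hahn_P nu) (hahn_N nu).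
Proof. exact: (proj2_sig (cid (proj2_sig (cid (Hahn_decomposition nu))))). Qed.

Definition cpos (nu : {charge set X -> \bar R}) : {measure set X -> \bar R} :=
  jordan_pos (hahn_PN nu).
Definition cneg (nu : {charge set X -> \bar R}) : {measure set X -> \bar R} :=
  jordan_neg (hahn_PN nu).
Definition cvar (nu : {charge set X -> \bar R}) : set X -> \bar R :=
  charge_variation (hahn_PN nu).

Definition signed_radon (nu : {charge set X -> \bar R}) : Prop :=
  forall A : set X, measurable A ->
    cvar nu A = ereal_sup [set cvar nu K | K in [set K : set T | compact K /\ K `<=` A]].

Definition cintegral (nu : {charge set X -> \bar R}) (f : T -> R) : \bar R :=
  (\int[cpos nu]_x (f x)%:E - \int[cneg nu]_x (f x)%:E)%E.

Definition compact_support (f : T -> R) : Prop :=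
  compact (closure [set x | f x != 0]).

Definition vague_cvg (nu_ : nat -> {measure set X -> \bar R})
    (nu : {measure set X -> \bar R}) : Prop :=
  forall f : T -> R, continuous f -> compact_support f ->
    (fun n => (\int[nu_ n]_x (f x)%:E)%E) @ \oo --> (\int[nu]_x (f x)%:E)%E.

Definition cvague_cvg (mu_ : nat -> {charge set X -> \bar R})
    (mu : {charge set X -> \bar R}) : Prop :=
  forall f : T -> R, continuous f -> compact_support f ->
    (fun n => cintegral (mu_ n) f) @ \oo --> cintegral mu f.

End signed_measures.

From HB Require Import structures.
From mathcomp Require Import all_boot all_order all_algebra.
From mathcomp Require Import all_classical all_reals all_analysis finmap.
From mathcomp Require Import ring lra.
Set Implicit Arguments. Unset Strict Implicit. Unset Printing Implicit Defensive.
Import Order.TTheory GRing.Theory Num.Theory.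
Import numFieldNormedType.Exports.
Local Open Scope classical_set_scope.
Local Open Scope ring_scope.

(** Write p_n, q_n, p, q for the Jordan parts of mu_n and mu; a bump is an
    Urysohn function with compact support.

    (=>) mu_n = p_n - q_n converges vaguely to p - q. If m_n --> m vaguely and
    K is compact, outer regularity gives an open V around K with compact
    closure and m(cl V) <= m(K) + e, and a bump phi that is 1 on K and 0 off V
    gives m_n(K) <= int phi dm_n --> int phi dm <= m(K) + e; apply this to p
    and to q.

    (<=) p and q live on the disjoint Hahn sets, so inner regularity of |mu|
    yields disjoint compact sets C and D carrying all but e of p and of q. For
    g >= 0 with compact support, testing int . d(p_n - q_n) against g phi,
    with phi = 1 on C and 0 on D, gives liminf int g dp_n >= int g dp, and
    likewise for q. Write g = M psi - k with k >= 0 and a bump psi that is 1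
    on the support of g and 0 off some V with p(cl V), q(cl V) close to the
    masses of that support; the mass condition on cl V and the lower bounds
    for k then give limsup int g d(p_n + q_n) <= int g d(p + q), so all the
    inequalities are equalities. Only the limit mu needs to be Radon. *)

Lemma relatively_compact_open_superset (T : ptopologicalType)
  (hT : hausdorff_space T) (lcT : locally_compact [set: T]) (K : set T) :
  compact K -> exists V : set T, [/\ open V, K `<=` V & compact (closure V)].
Proof.
move=> cK.
have nbhs_cpt (x : T) : exists U : set T, nbhs x U /\ compact U.
  by have [U + [cU _]] := lcT x I; rewrite withinET => Ux; exists U.
pose U x := proj1_sig (cid (nbhs_cpt x)).
have UP (x : T) : nbhs x (U x) /\ compact (U x) := proj2_sig (cid (nbhs_cpt x)).
have : cover_compact K by rewrite -compact_cover.
case/(_ T K (interior \o U)) => [i _|x Kx|D _ KD]; first exact: open_interior.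
  by exists x => //; exact: (UP x).1.
exists (cover [set` D] (interior \o U)); split => //.
  by apply: bigcup_open => i _; exact: open_interior.
have cUD : compact (cover [set` D] U).
  by rewrite /cover bigcup_fset; apply: bigsetU_compact => i _; exact: (UP i).2.
apply: (subclosed_compact _ cUD); first exact: closed_closure.
rewrite [X in _ `<=` X](closure_id _).1; last exact: compact_closed.
by apply: closureS => y [i Di /interior_subset Uy]; exists i.
Qed.

Lemma pseudometric_urysohn (R : realType) (T : pseudoMetricType R) (A B : set T) :
  closed A -> closed B -> A `&` B = set0 ->
  exists f : T -> R, [/\ continuous f, (forall x, 0 <= f x <= 1),
     (forall x, A x -> f x = 1) & (forall x, B x -> f x = 0)].
Proof.
move=> cA cB AB.
have : uniform_separator B A.
  by apply: (proj1 (@normal_separatorP R T) pseudometric_normal) => //; rewrite setIC.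
move=> /(@uniform_separatorP _ R) [f [cf f01 fB fA]].
exists f; split => // x.
- by have /f01 : range f (f x) by exists x.
- by move=> Ax; apply: fA; exists x.
- by move=> Bx; apply: fB; exists x.
Qed.

Section Borel_pseudometric.
Context (R : realType) (T : pseudoPMetricType R).
Local Notation X := (Borel T).

Lemma closed_Borel (A : set T) : closed A -> measurable (A : set X).
Proof.
move=> cA; rewrite -(setCK A); apply: measurableC.
by apply: sub_sigma_algebra; exact: closed_openC.
Qed.

Lemma continuous_Borel_measurable (f : T -> R) :
  continuous f -> measurable_fun (setT : set X) f.
Proof.
move=> /continuousP cf.
apply: (measurability _ (measurable_realfun.RGenOpens.measurableE R)).
move=> _ [_ [a [b ->] <-]]; apply: measurableI => //.
by apply: sub_sigma_algebra; exact/cf/interval_open.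
Qed.

Definition thickening (K : set T) (r : R) : set T :=
  \bigcup_(x in K) interior (ball x r).

Lemma open_thickening K r : open (thickening K r).
Proof. by apply: bigcup_open => x _; exact: open_interior. Qed.

Lemma sub_thickening K r : 0 < r -> K `<=` thickening K r.
Proof. by move=> r0 x Kx; exists x => //; exact: nbhsx_ballx. Qed.

Lemma thickeningS K r s : r <= s -> thickening K r `<=` thickening K s.
Proof. by move=> rs y [x Kx bxy]; exists x => //; apply: interiorS bxy; exact: le_ball. Qed.

Lemma bigcap_closure_thickening K : closed K ->
  \bigcap_n closure (thickening K n.+1%:R^-1) = K.
Proof.
move=> cK; apply/seteqP; split; last first.
  by move=> x Kx n _; apply/subset_closure/sub_thickening.
move=> y Fy; rewrite (closure_id K).1 // => B /nbhs_ballP [e /= e0 yeB].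
pose n := Num.truncn ((e / 2)^-1).
have ne : n.+1%:R^-1 < e / 2.
  rewrite -[X in _ < X](invrK (e / 2)) ltf_pV2 ?posrE ?invr_gt0 ?divr_gt0 //.
  exact: truncnS_gt.
have [z [[x Kx /interior_subset bxz] byz]] :=
  Fy n I _ (nbhsx_ballx y n.+1%:R^-1 ltac:(by rewrite invr_gt0)).
exists x; split => //; apply: yeB.
apply: le_ball (ball_triangle byz (ball_sym bxz)).
by rewrite [leRHS]splitr; apply/ltW/ltrD.
Qed.

Lemma finite_measure_outer_regular_compact (hT : hausdorff_space T)
    (lcT : locally_compact [set: T]) (m : {finite_measure set X -> \bar R})
    (K : set T) : compact K -> forall e : R, 0 < e ->
  exists V : set T, [/\ open V, K `<=` V, compact (closure V)
     & (m (closure V) <= m K + e%:E)%E].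
Proof.
move=> cK e e0.
have [V0 [oV0 KV0 cV0]] := relatively_compact_open_superset hT lcT cK.
have clK := compact_closed hT cK.
pose U n := V0 `&` thickening K n.+1%:R^-1.
pose F n := closure (U n) : set X.
have KU n : K `<=` U n by move=> x Kx; split; [exact: KV0|exact: sub_thickening].
have mF n : measurable (F n) by apply: closed_Borel; exact: closed_closure.
have bigcapF : \bigcap_n F n = K.
  apply/seteqP; split; last by move=> x Kx n _; exact/subset_closure/KU.
  rewrite -[X in _ `<=` X](bigcap_closure_thickening clK).
  by apply: subset_bigcap => n _; apply: closureS; exact: subIsetr.
have mKfin : m K \is a fin_num by apply: fin_num_measure; exact: closed_Borel.
have : (m \o F) @ \oo --> (fine (m K))%:E.
  rewrite fineK // -bigcapF; apply: nonincreasing_cvg_mu => //.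
  - by rewrite ltey_eq fin_num_measure ?mF.
  - by rewrite bigcapF; exact: closed_Borel.
  - move=> n k nk; apply/subsetPset; apply: closureS; apply: setIS; apply: thickeningS.
    by rewrite -(@lef_pV2 R) ?invrK ?posrE ?invr_gt0 // ler_nat.
move=> /(_ _ (@nbhs_open_ereal_lt _ (fine (m K)) (fun r => r + e) _)).
case=> [|N _ /(_ N (leqnn N)) mUN]; first by rewrite ltrDl.
exists (U N); split => //.
- exact/openI/open_thickening.
- apply: subclosed_compact (@closed_closure _ _) cV0 _.
  by apply: closureS; exact: subIsetl.
- by rewrite -[m K]fineK // -EFinD; exact: ltW.
Qed.

End Borel_pseudometric.

Lemma EFin_cvgP (R : realType) (r : nat -> R) (a : R) :
  (fun n => (r n)%:E) @ \oo --> a%:E <-> r @ \oo --> a.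
Proof. by rewrite fine_cvgP; split=> [[]|ra] //; split => //; exact: nearW. Qed.

Lemma limn_esup_le_EFinP (R : realType) (u : nat -> \bar R) (l : R) :
  (limn_esup u <= l%:E)%E <->
  forall e, 0 < e -> \forall n \near \oo, (u n <= (l + e)%:E)%E.
Proof.
split=> [ul e e0|ule].
- have : (limn_esup u < (l + e)%:E)%E by apply: le_lt_trans ul _; rewrite lte_fin ltrDl.
  rewrite /limn_esup limf_esupE => /ereal_inf_lt [_ [V Vn <-]] Ve.
  apply: filterS Vn => n Vn; apply: le_trans (ltW Ve); apply: ereal_sup_ubound.
  by exists n.
- apply/lee_addgt0Pr => e e0; rewrite /limn_esup limf_esupE.
  apply: le_trans; first apply: ereal_inf_lbound.
    by exists [set n | (u n <= (l + e)%:E)%E]; [exact: ule|].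
  by apply: ge_ereal_sup => _ [n Vn <-]; rewrite -EFinD.
Qed.

Section test_functions.
Context (R : realType) (T : pseudoPMetricType R).
Local Notation X := (Borel T).
Implicit Types (m : {finite_measure set X -> \bar R}) (f g : T -> R).

Definition test_fun f := continuous f /\ compact_support f.

Definition bounded_measurable f :=
  measurable_fun (setT : set X) f /\ exists M, forall x, `|f x| <= M.

Lemma test_fun_of_support f (B : set T) : continuous f ->
  (forall x, f x != 0 -> B x) -> compact (closure B) -> test_fun f.
Proof.
move=> cf fB cB; split => //.
apply: (subclosed_compact _ cB); first exact: closed_closure.
by apply: closureS => x /= /fB.
Qed.

Lemma test_funM f g : test_fun f -> continuous g -> test_fun (f \* g).
Proof.
move=> [cf sf] cg; apply: (test_fun_of_support (B := [set x | f x != 0])) => //.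
- by move=> x; apply: continuousM; [exact: cf|exact: cg].
- by move=> x /=; apply: contra => /eqP ->; rewrite mul0r.
Qed.

Lemma test_fun_funrpos f : test_fun f -> test_fun f^\+.
Proof.
move=> [cf sf]; apply: (test_fun_of_support (B := [set x | f x != 0])) => //.
- move=> x; apply: (@continuous_max _ _ f (cst 0)); first exact: cf.
  exact: cst_continuous.
- by move=> x /=; apply: contra => /eqP fx0; rewrite /funrpos fx0 maxxx.
Qed.

Lemma test_fun_funrneg f : test_fun f -> test_fun f^\-.
Proof.
move=> [cf sf]; rewrite -funrposN; apply: test_fun_funrpos.
apply: (test_fun_of_support (B := [set x | f x != 0])) => //.
- by move=> x; apply: continuousN; exact: cf.
- by move=> x /=; rewrite oppr_eq0.
Qed.

Lemma test_funZ c f : test_fun f -> test_fun (fun x => c * f x).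
Proof.
move=> [cf sf]; apply: (test_fun_of_support (B := [set x | f x != 0])) => //.
- by move=> x; apply: continuousM; [exact: cst_continuous|exact: cf].
- by move=> x /=; apply: contra => /eqP ->; rewrite mulr0.
Qed.

Lemma test_funB f g : test_fun f -> test_fun g -> test_fun (f \- g).
Proof.
move=> [cf sf] [cg sg].
apply: (test_fun_of_support (B := [set x | f x != 0] `|` [set x | g x != 0])).
- by move=> x; apply: cvgB; [exact: cf|exact: cg].
- move=> x /=; have [f0|] := eqVneq (f x) 0; last by left.
  by rewrite f0 sub0r oppr_eq0; right.
- by rewrite closureU; exact: compactU.
Qed.

Lemma test_fun_bounded f : test_fun f -> exists2 M, 0 < M & forall x, `|f x| <= M.
Proof.
move=> [cf sf].
have cI : compact (f @` closure [set x | f x != 0]).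
  by apply: continuous_compact => //; exact: continuous_subspaceT.
have [M [_ HM]] := compact_bounded cI.
exists (`|M| + 1) => [|x]; first by have := normr_ge0 M; lra.
have [->|fx0] := eqVneq (f x) 0; first by rewrite normr0; have := normr_ge0 M; lra.
apply: (HM (`|M| + 1)); first by have := ler_norm M; lra.
by exists x => //; exact: subset_closure.
Qed.

Lemma test_fun_bounded_measurable f : test_fun f -> bounded_measurable f.
Proof.
move=> tf; split; first exact: continuous_Borel_measurable tf.1.
by have [M _ fM] := test_fun_bounded tf; exists M.
Qed.

Lemma bounded_measurable_indic c (A : set X) :
  measurable A -> bounded_measurable (fun x => c * \1_A x).
Proof.
move=> mA; split.
  apply: measurable_realfun.measurable_funM; first exact: measurable_cst.
  exact: measurable_realfun.measurable_indic.
exists `|c| => x; rewrite normrM indicE.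
by case: (x \in A); rewrite ?normr1 ?normr0 ?mulr1 ?mulr0.
Qed.

Lemma bounded_measurable_integrable m f :
  bounded_measurable f -> m.-integrable setT (EFin \o f).
Proof.
move=> [mf [M fM]]; apply: measurable_bounded_integrable => //.
- by apply: fin_num_fun_lty; exact: fin_num_measure.
- exists M; split; first exact: num_real.
  by move=> y My x _; apply: le_trans (fM x) (ltW My).
Qed.

Lemma test_fun_integrable m f : test_fun f -> m.-integrable setT (EFin \o f).
Proof. by move=> /test_fun_bounded_measurable; exact: bounded_measurable_integrable. Qed.

Lemma integral_Rintegral m f : bounded_measurable f ->
  (\int[m]_x (f x)%:E)%E = (\int[m]_x f x)%:E.
Proof.
by move=> bf; rewrite fineK //; exact: integrable_fin_num (bounded_measurable_integrable m bf).
Qed.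

Lemma Rintegral_indic m c (A : set X) : measurable A ->
  \int[m]_x (c * \1_A x) = c * fine (m A).
Proof.
move=> mA; rewrite RintegralZl //; last exact: integrable_indic.
by rewrite /Rintegral integral_indic // setIT.
Qed.

Lemma Rintegral_le_measure m f c (A : set X) : measurable A -> bounded_measurable f ->
  (forall x, A x -> f x <= c) -> (forall x, ~ A x -> f x <= 0) ->
  \int[m]_x f x <= c * fine (m A).
Proof.
move=> mA bf fA fAC; rewrite -Rintegral_indic //.
apply: le_Rintegral => // [||x _]; try exact: bounded_measurable_integrable.
  exact/bounded_measurable_integrable/bounded_measurable_indic.
rewrite indicE; have [Ax|Ax] := pselect (A x).
- by rewrite mem_set // mulr1; exact: fA.
- by rewrite memNset // mulr0; exact: fAC.
Qed.

Lemma measure_le_Rintegral m f c (A : set X) : measurable A -> bounded_measurable f ->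
  (forall x, A x -> c <= f x) -> (forall x, 0 <= f x) ->
  c * fine (m A) <= \int[m]_x f x.
Proof.
move=> mA bf fA f0; rewrite -Rintegral_indic //.
apply: le_Rintegral => // [||x _]; try exact: bounded_measurable_integrable.
  exact/bounded_measurable_integrable/bounded_measurable_indic.
rewrite indicE; have [Ax|Ax] := pselect (A x).
- by rewrite mem_set // mulr1; exact: fA.
- by rewrite memNset // mulr0.
Qed.

Lemma Rintegral_bump_bounds m psi (A V : set T) : closed A -> test_fun psi ->
  (forall x, 0 <= psi x <= 1) -> (forall x, A x -> psi x = 1) ->
  (forall x, ~ V x -> psi x = 0) ->
  fine (m A) <= \int[m]_x psi x <= fine (m (closure V)).
Proof.
move=> cA tpsi psi01 psiA psiV; have bpsi := test_fun_bounded_measurable tpsi.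
apply/andP; split; rewrite -[fine _]mul1r.
- apply: measure_le_Rintegral => //; first exact: closed_Borel.
  + by move=> x /psiA ->.
  + by move=> x; case/andP: (psi01 x).
- apply: Rintegral_le_measure => //; first by apply: closed_Borel; exact: closed_closure.
  + by move=> x _; case/andP: (psi01 x).
  + by move=> x clVx; rewrite psiV // => Vx; apply: clVx; exact: subset_closure.
Qed.

Lemma vague_cvgP (m_ : nat -> {finite_measure set X -> \bar R}) m :
  vague_cvg m_ m <->
  forall f, test_fun f -> \int[m_ n]_x f x @[n --> \oo] --> \int[m]_x f x.
Proof.
have cvgE f : test_fun f ->
    (fun n => \int[m_ n]_x (f x)%:E)%E @ \oo --> (\int[m]_x (f x)%:E)%E <->
    \int[m_ n]_x f x @[n --> \oo] --> \int[m]_x f x.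
  move=> /test_fun_bounded_measurable bf; rewrite integral_Rintegral //.
  by under eq_fun do rewrite integral_Rintegral //; exact: EFin_cvgP.
split=> [mf f tf|mf f cf sf]; first by apply/(cvgE f tf); exact: mf tf.1 tf.2.
by apply/(cvgE f); [split|exact: mf].
Qed.

End test_functions.

Lemma urysohn_bump (R : realType) (T : pseudoPMetricType R) (hT : hausdorff_space T)
    (K V : set T) : compact K -> open V -> K `<=` V -> compact (closure V) ->
  exists psi : T -> R, [/\ test_fun psi, forall x, 0 <= psi x <= 1,
    forall x, K x -> psi x = 1 & forall x, ~ V x -> psi x = 0].
Proof.
move=> cK oV KV cV.
have KVC : K `&` ~` V = set0 by apply/disjoints_subset; rewrite setCK.
have [psi [cpsi psi01 psiK psiV]] :=
  pseudometric_urysohn (compact_closed hT cK) (open_closedC oV) KVC.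
exists psi; split => //.
apply: (test_fun_of_support (B := V)) => // x psix; apply: contrapT => Vx.
by move: psix; rewrite psiV // eqxx.
Qed.

Lemma vague_limsup_compact (R : realType) (T : pseudoPMetricType R)
    (hT : hausdorff_space T) (lcT : locally_compact [set: T])
    (m_ : nat -> {finite_measure set Borel T -> \bar R})
    (m : {finite_measure set Borel T -> \bar R}) :
  (forall f, test_fun f -> \int[m_ n]_x f x @[n --> \oo] --> \int[m]_x f x) ->
  forall K : set T, compact K -> forall e, 0 < e ->
  \forall n \near \oo, fine (m_ n K) <= fine (m K) + e.
Proof.
move=> mf K cK e e0; have e2 : 0 < e / 2 by rewrite divr_gt0.
have [V [oV KV cV mV]] := finite_measure_outer_regular_compact hT lcT m cK e2.
have [phi [tphi phi01 phiK phiV]] := urysohn_bump hT cK oV KV cV.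
have clK := compact_closed hT cK.
have mVK : fine (m (closure V)) <= fine (m K) + e / 2.
  rewrite -lee_fin EFinD !fineK ?fin_num_measure //; first exact: closed_Borel.
  by apply: closed_Borel; exact: closed_closure.
have /andP[_ up] := Rintegral_bump_bounds m clK tphi phi01 phiK phiV.
near=> n.
have /andP[lo _] := Rintegral_bump_bounds (m_ n) clK tphi phi01 phiK phiV.
have : `|\int[m]_x phi x - \int[m_ n]_x phi x| <= e / 2.
  by near: n; move/cvgrPdist_le: (mf phi tphi); apply.
by rewrite ler_norml => /andP[? ?]; lra.
Unshelve. all: by end_near.
Qed.

Section finite_measure_pairs.
Context (R : realType) (T : pseudoPMetricType R).
Local Notation X := (Borel T).
Local Notation fmeasure := {finite_measure set X -> \bar R}.
Implicit Types p q : fmeasure.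

Definition cvg_Rintegral_diff (p_ q_ : nat -> fmeasure) p q := forall f, test_fun f ->
  \int[p_ n]_x f x - \int[q_ n]_x f x @[n --> \oo] --> \int[p]_x f x - \int[q]_x f x.

Definition compactly_separated p q := forall e, 0 < e -> exists C D : set T,
  [/\ compact C, compact D, C `&` D = set0,
      (p (~` C) <= e%:E)%E & (q (~` D) <= e%:E)%E].

Definition limsup_mass_le (p_ q_ : nat -> fmeasure) p q := forall K : set T, compact K ->
  forall e, 0 < e -> \forall n \near \oo,
    fine (p_ n K) + fine (q_ n K) <= fine (p K) + fine (q K) + e.

Lemma cvg_Rintegral_diff_sym (p_ q_ : nat -> fmeasure) p q :
  cvg_Rintegral_diff p_ q_ p q -> cvg_Rintegral_diff q_ p_ q p.
Proof.
move=> pq f tf; rewrite -[X in _ --> X]opprB.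
by under eq_fun do rewrite -opprB; exact: cvgN (pq f tf).
Qed.

Lemma compactly_separated_sym p q :
  compactly_separated p q -> compactly_separated q p.
Proof.
move=> pq e e0; have [C [D [cC cD CD pC qD]]] := pq e e0.
by exists D, C; split => //; rewrite setIC.
Qed.

End finite_measure_pairs.

Section liminf.
Context (R : realType) (T : pseudoPMetricType R) (hT : hausdorff_space T).
Local Notation X := (Borel T).
Local Notation fmeasure := {finite_measure set X -> \bar R}.
Variables (p_ q_ : nat -> fmeasure) (p q : fmeasure).
Hypotheses (pq_cvg : cvg_Rintegral_diff p_ q_ p q)
  (pq_sep : compactly_separated p q).

Lemma Rintegral_liminf_ge g : test_fun g -> (forall x, 0 <= g x) ->
  forall e, 0 < e -> \forall n \near \oo, \int[p]_x g x - e <= \int[p_ n]_x g x.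
Proof.
move=> tg g0 e e0.
have [M M0 gM] := test_fun_bounded tg.
have gleM x : g x <= M by apply: le_trans (gM x); exact: ler_norm.
have [C [D [cC cD CD pC qD]]] := pq_sep (divr_gt0 e0 (mulr_gt0 (ltr0n _ 4) M0)).
have mC (A : set T) : compact A -> measurable (~` A : set X).
  by move=> cA; apply: measurableC; apply: closed_Borel; exact: compact_closed.
have small (m : fmeasure) (A : set T) : compact A ->
    (m (~` A) <= (e / (4 * M))%:E)%E -> M * fine (m (~` A)) <= e / 4.
  move=> cA mA; have -> : e / 4 = M * (e / (4 * M)) by field; rewrite gt_eqF.
  rewrite ler_pM2l // -lee_fin fineK //; apply: fin_num_measure; exact: mC.
have [phi [cphi phi01 phiC phiD]] :=
  pseudometric_urysohn (compact_closed hT cC) (compact_closed hT cD) CD.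
pose h := g \* phi; pose h' := g \* (fun x => 1 - phi x).
have th : test_fun h := test_funM tg cphi.
have th' : test_fun h'.
  by apply: test_funM tg _ => x; apply: cvgB; [exact: cvg_cst|exact: cphi].
have gE (m : fmeasure) : \int[m]_x g x = \int[m]_x h x + \int[m]_x h' x.
  rewrite -RintegralD //; try exact: test_fun_integrable.
  by apply: eq_Rintegral => x _; rewrite /h /h' /=; ring.
have h'_ge0 x : 0 <= h' x by rewrite /h' /=; have := phi01 x; have := g0 x; nra.
have h_ge0 x : 0 <= h x by rewrite /h /=; have := phi01 x; have := g0 x; nra.
have ph' : \int[p]_x h' x <= M * fine (p (~` C)).
  apply: Rintegral_le_measure => //; first exact: mC.
  - exact: test_fun_bounded_measurable.
  - by move=> x _; rewrite /h' /=; have := phi01 x; have := g0 x; have := gleM x; nra.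
  - by move=> x /contrapT /phiC; rewrite /h' /= => ->; rewrite subrr mulr0.
have qh : \int[q]_x h x <= M * fine (q (~` D)).
  apply: Rintegral_le_measure => //; first exact: mC.
  - exact: test_fun_bounded_measurable.
  - by move=> x _; rewrite /h /=; have := phi01 x; have := g0 x; have := gleM x; nra.
  - by move=> x /contrapT /phiD; rewrite /h /= => ->; rewrite mulr0.
have sp := small p C cC pC; have sq := small q D cD qD.
near=> n.
have : 0 <= \int[p_ n]_x h' x by apply: Rintegral_ge0 => x _; exact: h'_ge0.
have : 0 <= \int[q_ n]_x h x by apply: Rintegral_ge0 => x _; exact: h_ge0.
have : `|(\int[p]_x h x - \int[q]_x h x) - (\int[p_ n]_x h x - \int[q_ n]_x h x)| <= e / 2.
  by near: n; move/cvgrPdist_le: (pq_cvg th); apply; rewrite divr_gt0.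
rewrite (gE p) (gE (p_ n)) ler_norml => /andP[? ?]; lra.
Unshelve. all: by end_near.
Qed.

End liminf.

Section convergence.
Context (R : realType) (T : pseudoPMetricType R) (hT : hausdorff_space T)
  (lcT : locally_compact [set: T]).
Local Notation X := (Borel T).
Local Notation fmeasure := {finite_measure set X -> \bar R}.
Variables (p_ q_ : nat -> fmeasure) (p q : fmeasure).
Hypotheses (pq_cvg : cvg_Rintegral_diff p_ q_ p q)
  (pq_sep : compactly_separated p q) (pq_mass : limsup_mass_le p_ q_ p q).

Let p_liminf := Rintegral_liminf_ge hT pq_cvg pq_sep.
Let q_liminf :=
  Rintegral_liminf_ge hT (cvg_Rintegral_diff_sym pq_cvg) (compactly_separated_sym pq_sep).

Lemma Rintegral_limsup_sum_le g : test_fun g -> (forall x, 0 <= g x) ->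
  forall e, 0 < e -> \forall n \near \oo,
    \int[p_ n]_x g x + \int[q_ n]_x g x <= \int[p]_x g x + \int[q]_x g x + e.
Proof.
move=> tg g0 e e0.
have [M M0 gM] := test_fun_bounded tg.
pose S := closure [set x | g x != 0].
have cS : compact S := tg.2.
have clS : closed S by exact: closed_closure.
have gS x : ~ S x -> g x = 0.
  by move=> Sx; apply/eqP; apply: contra_notT Sx => gx; exact: subset_closure.
have mS : measurable (S : set X) by exact: closed_Borel.
have mcl (W : set T) : measurable (closure W : set X).
  by apply: closed_Borel; exact: closed_closure.
have d0 : 0 < e / (4 * M) by rewrite divr_gt0 // mulr_gt0.
have [V1 [oV1 SV1 _ pV1]] := finite_measure_outer_regular_compact hT lcT p cS d0.
have [V2 [oV2 SV2 cV2 qV2]] := finite_measure_outer_regular_compact hT lcT q cS d0.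
pose V := V1 `&` V2.
have cV : compact (closure V).
  apply: (subclosed_compact _ cV2); first exact: closed_closure.
  by apply: closureS; exact: subIsetr.
have [psi [tpsi psi01 psiS psiV]] :=
  urysohn_bump hT cS (openI oV1 oV2) (fun x Sx => conj (SV1 x Sx) (SV2 x Sx)) cV.
pose k := (fun x => M * psi x) \- g.
have tk : test_fun k by apply: test_funB tg; exact: test_funZ.
have k0 x : 0 <= k x.
  rewrite /k /=; have [Sx|Sx] := pselect (S x); last first.
    by rewrite gS // subr0; have := psi01 x; nra.
  by rewrite psiS // mulr1 subr_ge0 (le_trans (ler_norm _) (gM x)).
have gE (m : fmeasure) : \int[m]_x g x = M * \int[m]_x psi x - \int[m]_x k x.
  have iZ : m.-integrable setT (EFin \o (fun x => M * psi x)).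
    exact/test_fun_integrable/test_funZ.
  rewrite -RintegralZl //; last exact: test_fun_integrable.
  rewrite -RintegralB //; last exact: test_fun_integrable.
  by apply: eq_Rintegral => x _; rewrite /k /=; ring.
have bump (m : fmeasure) := Rintegral_bump_bounds m clS tpsi psi01 psiS psiV.
have Md : M * (e / (4 * M)) = e / 4 by field; rewrite gt_eqF.
have clV_bound (m : fmeasure) (W : set T) : closure V `<=` closure W ->
    (m (closure W) <= m S + (e / (4 * M))%:E)%E ->
    M * fine (m (closure V)) <= M * fine (m S) + e / 4.
  move=> VW mW; rewrite -Md -mulrDr ler_pM2l // -lee_fin EFinD !fineK ?fin_num_measure //.
  by apply: le_trans mW; apply: le_measure => //; exact/mem_set.
have pVS := clV_bound p V1 (closureS (@subIsetl _ V1 V2)) pV1.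
have qVS := clV_bound q V2 (closureS (@subIsetr _ V1 V2)) qV2.
have e8 : 0 < e / 8 by rewrite divr_gt0.
near=> n.
have : fine (p_ n (closure V)) + fine (q_ n (closure V)) <=
    fine (p (closure V)) + fine (q (closure V)) + e / (4 * M).
  by near: n; exact: pq_mass.
move=> /(ler_wpM2l (ltW M0)); rewrite !mulrDr Md => mass_n.
have : \int[p]_x k x - e / 8 <= \int[p_ n]_x k x by near: n; exact: p_liminf.
have : \int[q]_x k x - e / 8 <= \int[q_ n]_x k x by near: n; exact: q_liminf.
have /andP[_ /(ler_wpM2l (ltW M0)) ?] := bump (p_ n).
have /andP[_ /(ler_wpM2l (ltW M0)) ?] := bump (q_ n).
have /andP[/(ler_wpM2l (ltW M0)) ? _] := bump p.
have /andP[/(ler_wpM2l (ltW M0)) ? _] := bump q.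
rewrite !gE; lra.
Unshelve. all: by end_near.
Qed.

Lemma cvg_Rintegral_nonneg g : test_fun g -> (forall x, 0 <= g x) ->
  \int[p_ n]_x g x @[n --> \oo] --> \int[p]_x g x /\
  \int[q_ n]_x g x @[n --> \oo] --> \int[q]_x g x.
Proof.
move=> tg g0.
have close e : 0 < e -> \forall n \near \oo,
    `|\int[p]_x g x - \int[p_ n]_x g x| <= e /\ `|\int[q]_x g x - \int[q_ n]_x g x| <= e.
  move=> e0; have e2 : 0 < e / 2 by rewrite divr_gt0.
  near=> n.
  have : \int[p]_x g x - e / 2 <= \int[p_ n]_x g x by near: n; exact: p_liminf.
  have : \int[q]_x g x - e / 2 <= \int[q_ n]_x g x by near: n; exact: q_liminf.
  have : \int[p_ n]_x g x + \int[q_ n]_x g x <= \int[p]_x g x + \int[q]_x g x + e / 2.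
    by near: n; exact: Rintegral_limsup_sum_le.
  by rewrite !ler_norml => *; split; apply/andP; split; lra.
by split; apply/cvgrPdist_le => e e0; apply: filterS (close e e0) => n [].
Unshelve. all: by end_near.
Qed.

Lemma cvg_Rintegral f : test_fun f ->
  \int[p_ n]_x f x @[n --> \oo] --> \int[p]_x f x /\
  \int[q_ n]_x f x @[n --> \oo] --> \int[q]_x f x.
Proof.
move=> tf; have tfp := test_fun_funrpos tf; have tfn := test_fun_funrneg tf.
have fE (m : fmeasure) : \int[m]_x f x = \int[m]_x f^\+ x - \int[m]_x f^\- x.
  rewrite -RintegralB //; try exact: test_fun_integrable.
  by apply: eq_Rintegral => x _; rewrite -[in LHS](funrposBneg f).
have [pp qp] := cvg_Rintegral_nonneg tfp (funrpos_ge0 f).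
have [pn qn] := cvg_Rintegral_nonneg tfn (funrneg_ge0 f).
by split; rewrite fE; under eq_fun do rewrite fE; exact: cvgB.
Qed.

End convergence.

Section charges.
Context (R : realType) (T : pseudoPMetricType R).
Local Notation X := (Borel T).
Implicit Types nu : {charge set X -> \bar R}.

Lemma cposE nu (A : set X) : measurable A -> cpos nu A = nu (A `&` hahn_P nu).
Proof. by move=> mA; rewrite /cpos /= jordan_posE cjordan_posE /crestr0 mem_set. Qed.

Lemma cnegE nu (A : set X) : measurable A -> cneg nu A = (- nu (A `&` hahn_N nu))%E.
Proof. by move=> mA; rewrite /cneg /= jordan_negE cjordan_negE /crestr0 mem_set. Qed.

Lemma cvar_fin_num nu (A : set X) : measurable A -> cvar nu A \is a fin_num.
Proof. by move=> mA; rewrite fin_numD !fin_num_measure. Qed.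

Lemma cvarE nu (A : set X) : measurable A ->
  cvar nu A = (fine (cpos nu A) + fine (cneg nu A))%:E.
Proof. by move=> mA; rewrite EFinD !fineK // fin_num_measure. Qed.

Lemma cvague_cvgP (mu_ : nat -> {charge set X -> \bar R}) mu :
  cvague_cvg mu_ mu <->
  cvg_Rintegral_diff (fun n => cpos (mu_ n)) (fun n => cneg (mu_ n)) (cpos mu) (cneg mu).
Proof.
have E nu f : test_fun f ->
    cintegral nu f = (\int[cpos nu]_x f x - \int[cneg nu]_x f x)%:E.
  by move=> /test_fun_bounded_measurable bf; rewrite /cintegral !integral_Rintegral.
split=> [mf f tf|mf f cf sf].
- by move: (mf f tf.1 tf.2); rewrite E //; under eq_fun do rewrite E //; move/EFin_cvgP.
- have tf : test_fun f by split.
  by rewrite E //; under eq_fun do rewrite E //; apply/EFin_cvgP; exact: mf.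
Qed.

Lemma limn_esup_cvar_leP (mu_ : nat -> {charge set X -> \bar R}) mu (K : set X) :
  measurable K ->
  (limn_esup (fun n => cvar (mu_ n) K) <= cvar mu K)%E <->
  forall e, 0 < e -> \forall n \near \oo,
    fine (cpos (mu_ n) K) + fine (cneg (mu_ n) K) <=
    fine (cpos mu K) + fine (cneg mu K) + e.
Proof.
move=> mK; rewrite cvarE // limn_esup_le_EFinP.
by split=> h e e0; apply: filterS (h e e0) => n; rewrite cvarE // lee_fin.
Qed.

Section radon.
Context (hT : hausdorff_space T) (nu : {charge set X -> \bar R}).
Hypothesis nu_radon : signed_radon nu.

Lemma cvar_inner_regular (A : set X) : measurable A -> forall e, 0 < e ->
  exists K : set T, [/\ compact K, K `<=` A & (cvar nu (A `&` ~` K) <= e%:E)%E].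
Proof.
move=> mA e e0.
have fA := cvar_fin_num nu mA.
have : (cvar nu A - e%:E < cvar nu A)%E.
  by rewrite -(fineK fA) -EFinB lte_fin ltrBlDr ltrDl.
rewrite {2}(nu_radon mA) => /ereal_sup_gt [_ [K [cK KA] <-]] hK.
exists K; split => //.
have mK : measurable (K : set X) by apply: closed_Borel; exact: compact_closed.
have mAK : measurable (A `&` ~` K : set X) by apply: measurableI => //; exact: measurableC.
have AE : cvar nu A = (cvar nu K + cvar nu (A `&` ~` K))%E.
  rewrite -measureU //; last by rewrite setICA setICr setI0.
  congr (cvar nu _); rewrite setUIr setUCr setIT.
  by apply/seteqP; split => x /=; [right|case => // /KA].
move: hK; rewrite AE -(fineK (cvar_fin_num nu mK)) -(fineK (cvar_fin_num nu mAK)).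
by rewrite -EFinD lte_fin lee_fin => h; lra.
Qed.

Lemma compactly_separated_jordan : compactly_separated (cpos nu) (cneg nu).
Proof.
have [[mP _] [mN _] _ PN] := hahn_PN nu.
move=> e e0.
have [C [cC CP Ce]] := cvar_inner_regular mP e0.
have [D [cD DN De]] := cvar_inner_regular mN e0.
have mC : measurable (~` C : set X).
  by apply: measurableC; apply: closed_Borel; exact: compact_closed.
have mD : measurable (~` D : set X).
  by apply: measurableC; apply: closed_Borel; exact: compact_closed.
exists C, D; split => //.
- by apply/seteqP; split => // x [/CP Px /DN Nx]; rewrite -PN.
- apply: le_trans Ce; apply: le_trans (leeDl _ (measure_ge0 _ _)).
  rewrite cposE // [X in (_ <= X)%E]cposE; last by apply: measurableI => //.
  by rewrite setIAC setIid setIC.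
- apply: le_trans De; apply: le_trans (leeDr _ (measure_ge0 _ _)).
  rewrite cnegE // [X in (_ <= X)%E]cnegE; last by apply: measurableI => //.
  by rewrite setIAC setIid setIC.
Qed.

End radon.
End charges.

Theorem proposition2p7 (R : realType) (T : pseudoPMetricType R)
  (hT : hausdorff_space T) (lcT : locally_compact [set: T])
  (mu_ : nat -> {charge set Borel T -> \bar R}) (mu : {charge set Borel T -> \bar R})
  (radon_mu_ : forall n, signed_radon (mu_ n)) (radon_mu : signed_radon mu) :
  (vague_cvg (fun n => cpos (mu_ n)) (cpos mu) /\
   vague_cvg (fun n => cneg (mu_ n)) (cneg mu)) <->
  (cvague_cvg mu_ mu /\
   forall K : set T, compact K ->
     (limn_esup (fun n => cvar (mu_ n) K) <= cvar mu K)%E).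
Proof.
have mK K : compact K -> measurable (K : set (Borel T)).
  by move=> cK; apply: closed_Borel; exact: compact_closed.
split=> [[/vague_cvgP pos_cvg /vague_cvgP neg_cvg]|[/cvague_cvgP diff_cvg mass]].
- split=> [|K cK].
    by apply/cvague_cvgP => f tf; exact: cvgB (pos_cvg f tf) (neg_cvg f tf).
  apply/limn_esup_cvar_leP; first exact: mK.
  move=> e e0; have e2 : 0 < e / 2 by rewrite divr_gt0.
  apply: filterS2 (vague_limsup_compact hT lcT pos_cvg cK e2)
    (vague_limsup_compact hT lcT neg_cvg cK e2) => n; lra.
- have sep := compactly_separated_jordan hT radon_mu.
  have mass' : limsup_mass_le (fun n => cpos (mu_ n)) (fun n => cneg (mu_ n))
      (cpos mu) (cneg mu).
    by move=> K cK; apply/limn_esup_cvar_leP; [exact: mK|exact: mass].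
  by split; apply/vague_cvgP => f tf; have [] := cvg_Rintegral hT lcT diff_cvg sep mass' tf.
Qed.
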